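(* Let $T>0$ and $\alpha_1,\alpha_2\ge0$ with $\alpha_1+\alpha_2=1$. Consider problem (P2): maximize $r$ over $(r,r_1,r_2,x,p_1,p_2)$, where $x:[0,T]\to\mathbb{R}$ is an arbitrary (measurable) trajectory with no speed constraint, subject to $r_k\ge\alpha_k r$ for $k=1,2$, $(r_1,r_2)\in\mathcal{C}(x,p)$, $p_1(t)+p_2(t)\le\bar P$ and $p_k(t)\ge0$ for all $t$. Then an optimal solution of (P2) is: $x^*(t)=-D/2$, $p_1^*(t)=\bar P$, $p_2^*(t)=0$ for $t\in[0,\alpha_1T)$, and $x^*(t)=D/2$, $p_2^*(t)=\bar P$, $p_1^*(t)=0$ for $t\in[\alpha_1T,T]$. The corresponding optimal rate pair is $r_1^*=\alpha_1\log_2\left(1+\frac{\bar P\beta_0}{H^2}\right)$, $r_2^*=\alpha_2\log_2\left(1+\frac{\bar P\beta_0}{H^2}\right)$.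
   Context: Fix $D>0$, $H>0$, $\beta_0>0$, $\bar P>0$. Ground users GU 1, GU 2 are at horizontal positions $x_1=-D/2$, $x_2=D/2$; for UAV position $x\in\mathbb{R}$ (constant altitude $H$), $h_k(x)=\beta_0/((x-x_k)^2+H^2)$. A power allocation is a pair of measurable functions $p_1,p_2:[0,T]\to[0,\infty)$. $\mathcal{C}(x,p)$ is the set of $(r_1,r_2)$, $r_1,r_2\ge0$, with $r_1\le\frac1T\int_0^T\log_2(1+p_1(t)h_1(x(t)))dt$, $r_2\le\frac1T\int_0^T\log_2(1+p_2(t)h_2(x(t)))dt$, $r_1+r_2\le\frac1T\int_0^T\log_2(1+p_1(t)h_1(x(t))+p_2(t)h_2(x(t)))dt$. *)

From HB Require Import structures.
From mathcomp Require Import all_boot all_order all_algebra.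
From mathcomp Require Import all_classical all_reals all_analysis.
Set Implicit Arguments. Unset Strict Implicit. Unset Printing Implicit Defensive.
Import Order.TTheory GRing.Theory Num.Theory.
Local Open Scope classical_set_scope.
Local Open Scope ring_scope.

Definition log2 {R : realType} (y : R) : R := ln y / ln 2.

Definition chgain {R : realType} (beta0 H xk x : R) : R :=
  beta0 / ((x - xk) ^+ 2 + H ^+ 2).

Definition avg_over {R : realType} (T : R) (f : R -> R) : \bar R :=
  ((T^-1)%:E * \int[lebesgue_measure]_(t in `[0%R, T]%classic) (f t)%:E)%E.

Definition cap_region {R : realType} (T D H beta0 : R) (x p1 p2 : R -> R)
    (r1 r2 : R) : Prop :=
  let h1 := fun t => chgain beta0 H (- (D / 2)) (x t) in
  let h2 := fun t => chgain beta0 H (D / 2) (x t) in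
  [/\ 0 <= r1, 0 <= r2,
      (r1%:E <= avg_over T (fun t => log2 (1 + p1 t * h1 t)))%E,
      (r2%:E <= avg_over T (fun t => log2 (1 + p2 t * h2 t)))%E &
      ((r1 + r2)%:E <= avg_over T (fun t => log2 (1 + p1 t * h1 t + p2 t * h2 t)))%E].

Definition feasible_P2 {R : realType} (T D H beta0 Pbar alpha1 alpha2 : R)
    (r r1 r2 : R) (x p1 p2 : R -> R) : Prop :=
  [/\ [/\ measurable_fun `[0, T] x, measurable_fun `[0, T] p1 &
          measurable_fun `[0, T] p2],
      alpha1 * r <= r1, alpha2 * r <= r2,
      cap_region T D H beta0 x p1 p2 r1 r2 &
      forall t, t \in `[0, T] -> [/\ 0 <= p1 t, 0 <= p2 t & p1 t + p2 t <= Pbar]].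

Definition optimal_P2 {R : realType} (T D H beta0 Pbar alpha1 alpha2 : R)
    (r r1 r2 : R) (x p1 p2 : R -> R) : Prop :=
  feasible_P2 T D H beta0 Pbar alpha1 alpha2 r r1 r2 x p1 p2 /\
  forall r' r1' r2' (x' p1' p2' : R -> R),
    feasible_P2 T D H beta0 Pbar alpha1 alpha2 r' r1' r2' x' p1' p2' -> r' <= r.

From HB Require Import structures.
From mathcomp Require Import all_boot all_order all_algebra.
From mathcomp Require Import all_classical all_reals all_analysis.
From mathcomp Require Import ring.
Import Order.TTheory GRing.Theory Num.Theory.
Local Open Scope classical_set_scope.
Local Open Scope ring_scope.

(* The sum-rate constraint caps r: as alpha1 + alpha2 = 1, r <= r1 + r2, and
   pointwise log2 (1 + p1 h1 + p2 h2) <= log2 (1 + Pbar beta0 / H^2), since each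
   gain is at most beta0 / H^2 (its value when hovering right above the user)
   and p1 + p2 <= Pbar.  Time sharing -- full power while hovering above GU 1
   for the fraction alpha1 of the time, then above GU 2 -- meets this bound with
   equality and gives user k exactly the share alpha_k of it. *)

Lemma ge0_le_integral_nonmeasurable d (T : measurableType d) (R : realType)
    (mu : {measure set T -> \bar R}) (D : set T) (f g : T -> \bar R) :
  (forall x, D x -> (0 <= f x)%E) -> (forall x, D x -> (f x <= g x)%E) ->
  (\int[mu]_(x in D) f x <= \int[mu]_(x in D) g x)%E.
Proof.
move=> f0 fg.
have g0 x : D x -> (0 <= g x)%E by move=> Dx; exact: le_trans (f0 x Dx) (fg x Dx).
rewrite (ge0_integralE mu f0) (ge0_integralE mu g0) /=.
apply: ereal_sup_le => _ [h hf <-]; exists h => // x.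
apply: le_trans (hf x) _; rewrite /patch; case: ifP => // /[!inE] Dx.
exact: fg.
Qed.

Lemma ge0_integral_cst_indic d (T : measurableType d) (R : realType)
    (mu : {measure set T -> \bar R}) (D A : set T) (a : R) :
  measurable D -> measurable A -> 0 <= a ->
  (\int[mu]_(x in D) (a * \1_A x)%:E = a%:E * mu (A `&` D))%E.
Proof.
move=> mD mA a0; rewrite (@integralZl_indic _ _ _ mu D mD (fun=> A)) //.
  by rewrite integral_indic.
by move=> /lt_le_trans /(_ a0); rewrite ltxx.
Qed.

Section time_average.
Variable R : realType.
Implicit Types (a b c s y z T : R) (f g : R -> R).

Lemma measurable_fun_step (D : set R) c a b :
  measurable_fun D (fun t => if t < c then a else b).
Proof.
apply: measurable_funTS; apply: measurable_fun_ifT => //.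
exact: measurable_realfun.measurable_fun_ltr.
Qed.

Lemma log2_1 : log2 (1 : R) = 0.
Proof. by rewrite /log2 ln1 mul0r. Qed.

Lemma log2_ge0 y : 1 <= y -> 0 <= log2 y.
Proof. by move=> y1; rewrite /log2 divr_ge0 // ln_ge0 // ler1n. Qed.

Lemma ler_log2 y z : 0 < y -> y <= z -> log2 y <= log2 z.
Proof.
move=> y0 yz; rewrite /log2 ler_pM2r; last by rewrite invr_gt0 ln_gt0 // ltr1n.
by rewrite ler_ln // ?posrE // (lt_le_trans y0 yz).
Qed.

Lemma lebesgue_measure_itv_le a b (l r : bool) : a <= b ->
  lebesgue_measure [set` Interval (BSide l a) (BSide r b)] = (b - a)%:E.
Proof.
move=> ab; rewrite lebesgue_measure_itv /= lte_fin; case: ltP => // ba.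
have -> : b = a by apply/le_anti; rewrite ba ab.
by rewrite subrr.
Qed.

Lemma eq_avg_over T f g : {in `[0, T], f =1 g} -> avg_over T f = avg_over T g.
Proof.
by move=> fg; congr (_ * _)%E; apply: eq_integral => t /set_mem tD; rewrite fg.
Qed.

Lemma avg_over_cst T c : 0 < T -> avg_over T (fun=> c) = c%:E.
Proof.
move=> T0; rewrite /avg_over (integral_cst _ _ c%:E) //= lebesgue_measure_itv_le ?ltW //.
by rewrite subr0 -EFinM mulrCA mulVf ?mulr1 // gt_eqF.
Qed.

Lemma avg_over_step_lt T s a : 0 < T -> 0 <= s <= 1 -> 0 <= a ->
  avg_over T (fun t => if t < s * T then a else 0) = (s * a)%:E.
Proof.
move=> T0 /andP[s0 s1] a0; have sTT : s * T <= T by rewrite ler_piMl // ltW.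
rewrite /avg_over (@eq_integral _ _ _ lebesgue_measure _
  (fun t => (a * \1_`]-oo, s * T[ t)%:E)); last first.
  move=> t _; rewrite indicE; case: ifPn => ts.
    by rewrite mem_set ?mulr1 //= in_itv.
  by rewrite memNset ?mulr0 //= in_itv /= (negbTE ts).
rewrite ge0_integral_cst_indic // -itv_setI /Order.meet /= meet_l ?bnd_simp //.
rewrite join_r // lebesgue_measure_itv_le; last by rewrite mulr_ge0 // ltW.
by rewrite -!EFinM; congr EFin; field; rewrite gt_eqF.
Qed.

Lemma avg_over_step_ge T s a : 0 < T -> 0 <= s <= 1 -> 0 <= a ->
  avg_over T (fun t => if t < s * T then 0 else a) = ((1 - s) * a)%:E.
Proof.
move=> T0 /andP[s0 s1] a0; have sT0 : 0 <= s * T by rewrite mulr_ge0 // ltW.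
rewrite /avg_over (@eq_integral _ _ _ lebesgue_measure _
  (fun t => (a * \1_`[s * T, +oo[ t)%:E)); last first.
  move=> t _; rewrite indicE; case: ifPn => ts.
    by rewrite memNset ?mulr0 //= in_itv /= leNgt ts.
  by rewrite mem_set ?mulr1 //= in_itv /= leNgt ts.
rewrite ge0_integral_cst_indic // -itv_setI /Order.meet /= join_l ?bnd_simp //.
rewrite meet_r // lebesgue_measure_itv_le; last by rewrite ler_piMl // ltW.
by rewrite -!EFinM; congr EFin; field; rewrite gt_eqF.
Qed.

Lemma avg_over_le_cst T f c : 0 < T -> {in `[0, T], forall t, 0 <= f t <= c} ->
  (avg_over T f <= c%:E)%E.
Proof.
move=> T0 fc; rewrite -(avg_over_cst T c T0) /avg_over.
apply: lee_wpmul2l; first by rewrite lee_fin invr_ge0 ltW.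
by apply: ge0_le_integral_nonmeasurable => t /fc /andP[f0 fc']; rewrite lee_fin.
Qed.

End time_average.

Section gain.
Variables (R : realType) (beta0 H : R).
Hypotheses (beta0_ge0 : 0 <= beta0) (H_gt0 : 0 < H).

Lemma chgain_ge0 xk x : 0 <= chgain beta0 H xk x.
Proof. by rewrite divr_ge0 // addr_ge0 ?sqr_ge0. Qed.

Lemma chgain_le xk x : chgain beta0 H xk x <= beta0 / H ^+ 2.
Proof.
by rewrite ler_wpM2l // lef_pV2 ?posrE ?ltr_wpDl ?sqr_ge0 ?exprn_gt0 // lerDr sqr_ge0.
Qed.

Lemma chgain_id xk : chgain beta0 H xk xk = beta0 / H ^+ 2.
Proof. by rewrite /chgain subrr expr0n add0r. Qed.

End gain.

Lemma sum_rate_bound (R : realType) (P g p1 p2 g1 g2 : R) :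
  0 <= p1 -> 0 <= p2 -> p1 + p2 <= P -> 0 <= g1 <= g -> 0 <= g2 <= g ->
  0 <= log2 (1 + p1 * g1 + p2 * g2) <= log2 (1 + P * g).
Proof.
move=> p10 p20 pP /andP[g10 g1g] /andP[g20 g2g].
have sum_ge0 : 0 <= p1 * g1 + p2 * g2 by rewrite addr_ge0 ?mulr_ge0.
rewrite -addrA log2_ge0 ?lerDl //= ler_log2 ?ltr_wpDr // lerD2l.
apply: (@le_trans _ _ (p1 * g + p2 * g)); first by rewrite lerD ?ler_wpM2l.
by rewrite -mulrDl ler_wpM2r // (le_trans g10).
Qed.

Lemma feasible_P2_le (R : realType) (T D H beta0 Pbar alpha1 alpha2 r r1 r2 : R)
    (x p1 p2 : R -> R) :
  0 < T -> 0 < H -> 0 <= beta0 -> alpha1 + alpha2 = 1 ->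
  feasible_P2 T D H beta0 Pbar alpha1 alpha2 r r1 r2 x p1 p2 ->
  r <= log2 (1 + Pbar * beta0 / H ^+ 2).
Proof.
move=> T0 H0 b0 a12 [_ r1r r2r [_ _ _ _ sum_rate] power].
have : ((r1 + r2)%:E <= (log2 (1 + Pbar * beta0 / H ^+ 2))%:E)%E.
  apply: (le_trans sum_rate); apply: avg_over_le_cst => // t /power[p10 p20 pP].
  by rewrite -mulrA sum_rate_bound ?chgain_ge0 ?chgain_le.
rewrite lee_fin; apply: le_trans.
by rewrite -[r]mul1r -a12 mulrDl lerD.
Qed.

Lemma time_sharing_feasible (R : realType) (T D H beta0 Pbar alpha1 alpha2 : R) :
  0 < T -> 0 <= beta0 -> 0 <= Pbar ->
  0 <= alpha1 -> 0 <= alpha2 -> alpha1 + alpha2 = 1 ->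
  let L := log2 (1 + Pbar * beta0 / H ^+ 2) in
  feasible_P2 T D H beta0 Pbar alpha1 alpha2 L (alpha1 * L) (alpha2 * L)
    (fun t => if t < alpha1 * T then - (D / 2) else D / 2)
    (fun t => if t < alpha1 * T then Pbar else 0)
    (fun t => if t < alpha1 * T then 0 else Pbar).
Proof.
move=> T0 b0 P0 a10 a20 a12 L.
have L0 : 0 <= L by rewrite log2_ge0 // lerDl divr_ge0 ?sqr_ge0 ?mulr_ge0.
have a1_01 : 0 <= alpha1 <= 1 by rewrite a10 -a12 lerDl.
have hover_rate xk : log2 (1 + Pbar * chgain beta0 H xk xk) = L.
  by rewrite chgain_id mulrA.
split => //.
- by split; exact: measurable_fun_step.
- split; rewrite ?(mulr_ge0 a10 L0) ?(mulr_ge0 a20 L0) //.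
  + rewrite (@eq_avg_over _ _ _ (fun t => if t < alpha1 * T then L else 0)).
      by rewrite avg_over_step_lt.
    by move=> t _ /=; case: ifP => _; rewrite ?hover_rate // mul0r addr0 log2_1.
  + rewrite (@eq_avg_over _ _ _ (fun t => if t < alpha1 * T then 0 else L)).
      by rewrite avg_over_step_ge // -a12 addrAC subrr add0r.
    by move=> t _ /=; case: ifP => _; rewrite ?hover_rate // mul0r addr0 log2_1.
  + rewrite (@eq_avg_over _ _ _ (fun=> L)).
      by rewrite avg_over_cst // -mulrDl a12 mul1r.
    by move=> t _ /=; case: ifP => _; rewrite mul0r ?addr0 ?add0r hover_rate.
- by move=> t _; case: ifP => _; rewrite ?addr0 ?add0r ?lexx.
Qed.

Theorem lemma4 (R : realType) (D H beta0 Pbar T alpha1 alpha2 : R) :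
  0 < D -> 0 < H -> 0 < beta0 -> 0 < Pbar -> 0 < T ->
  0 <= alpha1 -> 0 <= alpha2 -> alpha1 + alpha2 = 1 ->
  let xs := fun t : R => if t < alpha1 * T then - (D / 2) else D / 2 in
  let p1s := fun t : R => if t < alpha1 * T then Pbar else 0 in
  let p2s := fun t : R => if t < alpha1 * T then 0 else Pbar in
  let L := log2 (1 + Pbar * beta0 / H ^+ 2) in
  optimal_P2 T D H beta0 Pbar alpha1 alpha2 L (alpha1 * L) (alpha2 * L) xs p1s p2s.
Proof.
move=> _ H0 b0 P0 T0 a10 a20 a12 xs p1s p2s L.
split; first exact: time_sharing_feasible (ltW b0) (ltW P0) a10 a20 a12.
by move=> r r1 r2 x p1 p2; apply: feasible_P2_le (ltW b0) a12.
Qed.
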